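(* Let $k$ be a field and $d\ge 0$ an integer. Let $A_{d+1}=k[a_1,\ldots,a_{d+1},b_1,\ldots,b_{d+1}]$ and $B_d=k[a_1,\ldots,a_d,b_1,\ldots,b_d,c]$, bigraded as in the context, and regard $B_d$ as a bigraded $A_{d+1}$-module via the algebra morphism $f:A_{d+1}\to B_d$ defined in the context. Then there is an exact sequence of bigraded $A_{d+1}$-modules $$0\to t^{-2}v^{2(d+1)}\frac{1-v^{2(d+1)}}{1-v^2}\cdot A_{d+1}\longrightarrow \frac{1-v^{2(d+1)}}{1-v^2}\cdot A_{d+1}\longrightarrow B_d\to 0,$$ where $\frac{1-v^{2(d+1)}}{1-v^2}=1+v^2+\cdots+v^{2d}$.
   Context: For $e\ge 0$, $A_e=k[a_1,\ldots,a_e,b_1,\ldots,b_e]$ is the bigraded polynomial algebra with $\deg(a_i)=(2(e-i+1),0)$ and $\deg(b_i)=(2(e-i+1),-2)$. $B_d=k[a_1,\ldots,a_d,b_1,\ldots,b_d,c]$ is bigraded with $\deg(a_i)=(2(d-i+1),0)$, $\deg(b_i)=(2(d-i+1),-2)$, $\deg(c)=(2,0)$. The morphism of bigraded algebras $f:A_{d+1}\to B_d$ is given by $a_i\mapsto a_{i-1}-ca_i$ and $b_i\mapsto b_{i-1}-cb_i$ for $1\le i\le d+1$, where one sets $a_0=b_0=b_{d+1}=0$ and $a_{d+1}=1$ in $B_d$. Notation: for a bigraded vector space $N=\bigoplus_{i,j}N_{ij}$ with finite-dimensional components, its class is $P=\sum_{i,j}v^it^j\dim N_{ij}$, and for a bigraded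 module $M$, $P\cdot M$ denotes the bigraded module $N\otimes_k M$ (well defined up to isomorphism); e.g. $v^it^j\cdot M$ is $M$ with bigrading shifted so that a copy of $k$ in degree $(i,j)$ is tensored on. *)

From HB Require Import structures.
From mathcomp Require Import all_boot all_order all_algebra.
From mathcomp Require Import mpoly.
Set Implicit Arguments. Unset Strict Implicit. Unset Printing Implicit Defensive.
Import Order.TTheory GRing.Theory Num.Theory.
Local Open Scope ring_scope.

Section Defs.
Variable k : fieldType.

(* A_e = k[a_1..a_e, b_1..b_e]: variable index lshift e j is a_(j+1),
   rshift e j is b_(j+1), for j : 'I_e (0-based). *)
Definition Aalg (e : nat) := {mpoly k[e + e]}.

Definition degA (e : nat) (i : 'I_(e + e)) : int * int :=
  match split i with
  | inl j => (Posz (2 * (e - j))%N, 0)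
  | inr j => (Posz (2 * (e - j))%N, -2)
  end.

(* B_d = k[a_1..a_d, b_1..b_d, c]: indices are those of A_d (widened),
   and the last index ord_max is c. *)
Definition Balg (d : nat) := {mpoly k[(d + d).+1]}.

Definition degB (d : nat) (i : 'I_((d + d).+1)) : int * int :=
  match unlift ord_max i with
  | Some j => degA j
  | None => (2, 0)
  end.

Definition Bidx_a (d : nat) (j : 'I_d) : 'I_((d + d).+1) :=
  widen_ord (leqnSn _) (lshift d j).
Definition Bidx_b (d : nat) (j : 'I_d) : 'I_((d + d).+1) :=
  widen_ord (leqnSn _) (rshift d j).

Definition Bc (d : nat) : Balg d := 'X_(ord_max).

(* a_n in B_d for 1 <= n <= d, with a_0 = 0 and a_(d+1) = 1 *)
Definition aB (d n : nat) : Balg d :=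
  if n == 0%N then 0 else if n == d.+1 then 1 else
  match (insub n.-1 : option 'I_d) with
  | Some j => 'X_(Bidx_a j) | None => 0 end.

(* b_n in B_d for 1 <= n <= d, with b_0 = 0 and b_(d+1) = 0 *)
Definition bB (d n : nat) : Balg d :=
  if n == 0%N then 0 else if n == d.+1 then 0 else
  match (insub n.-1 : option 'I_d) with
  | Some j => 'X_(Bidx_b j) | None => 0 end.

Definition fvar (d : nat) (i : 'I_(d.+1 + d.+1)) : Balg d :=
  match split i with
  | inl j => aB d j - Bc d * aB d j.+1
  | inr j => bB d j - Bc d * bB d j.+1
  end.

Definition fmor (d : nat) (p : Aalg d.+1) : Balg d :=
  comp_mpoly [tuple @fvar d i | i < d.+1 + d.+1] p.

Definition mbideg (n : nat) (deg : 'I_n -> int * int) (m : 'X_{1..n}) : int * int :=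
  (\sum_(i < n) (m i)%:Z * (deg i).1, \sum_(i < n) (m i)%:Z * (deg i).2).

(* p is bihomogeneous of bidegree pq (0 is homogeneous of every bidegree) *)
Definition bihomog (n : nat) (deg : 'I_n -> int * int) (pq : int * int)
    (p : {mpoly k[n]}) : Prop :=
  forall m, m \in msupp p -> mbideg deg m = pq.

(* The bigraded free module P . A_e with P = sum_i v^(g i).1 t^(g i).2 is
   modelled as row vectors 'rV[A_e]_r, the i-th basis vector sitting in
   bidegree g i. *)
Definition free_homog (e r : nat) (g : 'I_r -> int * int) (pq : int * int)
    (x : 'rV[Aalg e]_r) : Prop :=
  forall i : 'I_r, bihomog (@degA e) (pq.1 - (g i).1, pq.2 - (g i).2) (x 0 i).

(* generator bidegrees of (1 + v^2 + ... + v^(2d)) . A_(d+1) *)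
Definition gen0 (d : nat) (i : 'I_d.+1) : int * int := (Posz (2 * i)%N, 0).
(* generator bidegrees of t^(-2) v^(2(d+1)) (1 + v^2 + ... + v^(2d)) . A_(d+1) *)
Definition gen1 (d : nat) (i : 'I_d.+1) : int * int :=
  (Posz (2 * d.+1 + 2 * i)%N, -2).

End Defs.

From Pilot Require Import Defs.
From HB Require Import structures.
From mathcomp Require Import all_boot all_order all_algebra.
From mathcomp Require Import mpoly.
From mathcomp Require Import zify ring.
Set Implicit Arguments. Unset Strict Implicit. Unset Printing Implicit Defensive.
Import Order.TTheory GRing.Theory Num.Theory Pdiv.CommonRing Pdiv.RingMonic.
Local Open Scope ring_scope.

(** Extend [f] to the ring map [A_(d+1)[X] -> B_d] sending [X] to [c], and put
    [P = X^(d+1) + a_(d+1) X^d + ... + a_1] and [Q = b_(d+1) X^d + ... + b_1].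
    Since [f a_i = a_(i-1) - c a_i], both [P] and [Q] telescope to [0]; conversely
    the ring map [B_d -> A_(d+1)[X]] sending [c] to [X] and [a_i], [b_i] to the
    tails [P %/ X^i], [Q %/ X^i] is a section which is inverse to it modulo
    [(P, Q)].  Hence [B_d = A_(d+1)[X]/(P, Q)].  As [P] is monic, [A_(d+1)[X]/(P)]
    is free on [1, X, ..., X^d], in bidegrees [(2i, 0)], and the resolution is
    multiplication by [Q], of bidegree [(2(d+1), -2)], on it.  Specializing
    [b_1 := 1] and [b_i := 0] for [i > 1] fixes [P] and sends [Q] to [1], so the
    determinant of this multiplication specializes to [1]; it is therefore
    nonzero, and multiplication by [Q] is injective over the domain [A_(d+1)]. *)

Lemma split_lshift m1 m2 (j : 'I_m1) : split (lshift m2 j) = inl j.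
Proof. exact: (unsplitK (inl _ j)). Qed.

Lemma split_rshift m1 m2 (j : 'I_m2) : split (rshift m1 j) = inr j.
Proof. exact: (unsplitK (inr _ j)). Qed.

Lemma comp_mpoly_mktupleX (R : comRingType) n m (F : 'I_n -> {mpoly R[m]}) i :
  comp_mpoly [tuple F j | j < n] 'X_i = F i.
Proof. by rewrite comp_mpolyXU -tnth_nth tnth_mktuple. Qed.

Lemma drop_poly_cons (R : nzRingType) j (p : {poly R}) :
  drop_poly j p = (p`_j)%:P + 'X * drop_poly j.+1 p.
Proof.
apply/polyP => -[|i]; rewrite coefD coefC coefXM !coef_drop_poly /=.
  by rewrite addr0.
by rewrite add0r addnS.
Qed.

Lemma mpoly_ring_ind (R : ringType) m (P : {mpoly R[m]} -> Prop) :
  (forall c, P c%:MP) -> (forall i, P 'X_i) ->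
  (forall p q, P p -> P q -> P (p + q)) ->
  (forall p q, P p -> P q -> P (p * q)) -> forall p, P p.
Proof.
move=> hC hX hD hM r; elim/mpolyind: r => [|c mon r _ _ hr]; first by rewrite -mpolyC0.
apply: (hD _ _ _ hr); rewrite -mul_mpolyC; apply: (hM _ _ (hC c)).
rewrite mpolyXE_id; apply: (big_ind P) => [|p q|i _]; [by rewrite -mpolyC1 | exact: hM |].
by elim: (mon i) => [|e IHe]; [rewrite expr0 -mpolyC1 | rewrite exprS; apply: hM].
Qed.

Lemma horner_map_telescope (R : nzRingType) (S : comNzRingType) (f : {rmorphism R -> S})
    (u : S) (s : nat -> S) (p : {poly R}) N :
  (size p <= N)%N -> (forall i, f p`_i = s i - u * s i.+1) ->
  (map_poly f p).[u] = s 0%N - s N * u ^+ N.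
Proof.
move=> szp hs; rewrite (horner_coef_wide _ (leq_trans (size_poly _ _) szp)).
under eq_bigr => i _ do rewrite coef_map /= hs mulrBl [u * _]mulrC -mulrA -exprS.
rewrite -(big_mkord xpredT (fun i => s i * u ^+ i - s i.+1 * u ^+ i.+1)).
rewrite -[RHS]opprB; have := telescope_sumr (fun i => s i * u ^+ i) (leq0n N).
rewrite expr0 mulr1 => <-.
by rewrite -sumrN; apply: eq_bigr => i _; rewrite opprB.
Qed.

Lemma rmodp_map (R S : nzRingType) (f : {rmorphism R -> S}) (p q : {poly R}) :
  q \is monic -> map_poly f (rmodp p q) = rmodp (map_poly f p) (map_poly f q).
Proof.
move=> monq; rewrite [in RHS](rdivp_eq monq p) rmorphD rmorphM /=.
rewrite rmodp_addl_mul_small ?monic_map //.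
rewrite (leq_ltn_trans (size_poly _ _)) // size_map_poly_id0 ?ltn_rmodpN0 ?monic_neq0 //.
by rewrite (monicP monq) rmorph1 oner_neq0.
Qed.


(** * Bihomogeneous polynomials *)

Section Bihomog.
Variables (k : fieldType) (n : nat) (deg : 'I_n -> int * int).
Implicit Types (p q : {mpoly k[n]}) (pq : int * int).
Local Notation bihomog := (@bihomog k n deg).

Lemma mbidegE (m : 'X_{1..n}) : mbideg deg m = \sum_(i < n) deg i *+ m i.
Proof.
rewrite /mbideg [RHS]surjective_pairing (big_morph fst (id1 := 0) (op1 := +%R)) //.
rewrite (big_morph snd (id1 := 0) (op1 := +%R)) //.
by congr pair; apply: eq_bigr => i _; rewrite pairMnE /= mulrC -natz mulr_natr.
Qed.

Lemma bihomog0 pq : bihomog pq 0.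
Proof. by move=> m; rewrite -mpolyC0 msupp0. Qed.

Lemma bihomogD pq p q : bihomog pq p -> bihomog pq q -> bihomog pq (p + q).
Proof. by move=> hp hq m /msuppD_le; rewrite mem_cat => /orP[/hp|/hq]. Qed.

Lemma bihomogN pq p : bihomog pq p -> bihomog pq (- p).
Proof. by move=> hp m; rewrite (perm_mem (msuppN p)) => /hp. Qed.

Lemma bihomogB pq p q : bihomog pq p -> bihomog pq q -> bihomog pq (p - q).
Proof. by move=> hp hq; apply/bihomogD/bihomogN. Qed.

Lemma bihomogZ pq c p : bihomog pq p -> bihomog pq (c *: p).
Proof. by move=> hp m /msuppZ_le /hp. Qed.

Lemma bihomog_sum (I : Type) (r : seq I) (P : pred I) (F : I -> {mpoly k[n]}) pq :
  (forall i, P i -> bihomog pq (F i)) -> bihomog pq (\sum_(i <- r | P i) F i).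
Proof. by move=> hF; elim/big_rec: _ => [|i p Pi]; [exact: bihomog0 | exact/bihomogD/hF]. Qed.

Lemma bihomogC c : bihomog 0 c%:MP.
Proof.
move=> m; rewrite msuppC; case: eqP => // _; rewrite inE => /eqP ->.
by rewrite mbidegE big1 // => i _; rewrite mnm0E.
Qed.

Lemma bihomogX i : bihomog (deg i) 'X_i.
Proof.
move=> m; rewrite msuppX inE mbidegE => /eqP ->; rewrite (bigD1 i) //= big1 => [|j].
  by rewrite mnm1E eqxx addr0.
by rewrite mnm1E eq_sym => /negbTE ->.
Qed.

Lemma bihomogM pq1 pq2 p q :
  bihomog pq1 p -> bihomog pq2 q -> bihomog (pq1 + pq2) (p * q).
Proof.
move=> hp hq m /msuppM_le /allpairsP [[m1 m2] [/= /hp <- /hq <- ->]].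
by rewrite !mbidegE -big_split; apply: eq_bigr => i _; rewrite mnmDE mulrnDr.
Qed.

Lemma bihomog_prod (I : Type) (r : seq I) (P : pred I) (F : I -> {mpoly k[n]})
    (g : I -> int * int) :
  (forall i, P i -> bihomog (g i) (F i)) ->
  bihomog (\sum_(i <- r | P i) g i) (\prod_(i <- r | P i) F i).
Proof.
move=> hF; apply: (big_rec2 (fun s p => bihomog s p)) => [|i s p Pi]; last exact/bihomogM/hF.
by rewrite -mpolyC1; apply: bihomogC.
Qed.

Lemma bihomogXn pq p e : bihomog pq p -> bihomog (pq *+ e) (p ^+ e).
Proof.
move=> hp; elim: e => [|e IH]; first by rewrite expr0 -mpolyC1; apply: bihomogC.
by rewrite exprS mulrS; apply: bihomogM.
Qed.

End Bihomog.
Arguments bihomogX [k n] deg i.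

Lemma bihomog_comp (k : fieldType) n1 n2 (deg1 : 'I_n1 -> int * int)
    (deg2 : 'I_n2 -> int * int) (t : n1.-tuple {mpoly k[n2]}) p pq :
  (forall i, bihomog deg2 (deg1 i) (tnth t i)) -> bihomog deg1 pq p ->
  bihomog deg2 pq (comp_mpoly t p).
Proof.
move=> ht hp; rewrite comp_mpolyE big_seq; apply: bihomog_sum => m /hp <-.
by apply/bihomogZ; rewrite mbidegE; apply: bihomog_prod => i _; apply/bihomogXn/ht.
Qed.

Section PolyBihomog.
Variables (k : fieldType) (n : nat) (deg : 'I_n -> int * int).
Implicit Types (p q : {poly {mpoly k[n]}}) (pq : int * int).
Local Notation bihomog := (@bihomog k n deg).

(* [X] gets the bidegree [(2, 0)] of [c]. *)
Definition poly_bihomog pq p := forall i, bihomog (pq - (2, 0) *+ i) p`_i.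

Lemma poly_bihomogB pq p q : poly_bihomog pq p -> poly_bihomog pq q -> poly_bihomog pq (p - q).
Proof. by move=> hp hq i; rewrite coefB; apply: bihomogB. Qed.

Lemma poly_bihomogM pq1 pq2 p q :
  poly_bihomog pq1 p -> poly_bihomog pq2 q -> poly_bihomog (pq1 + pq2) (p * q).
Proof.
move=> hp hq i; rewrite coefM; apply: bihomog_sum => j _.
have -> : pq1 + pq2 - (2, 0) *+ i = (pq1 - (2, 0) *+ j) + (pq2 - (2, 0) *+ (i - j)).
  by rewrite addrACA -opprD -mulrnDr subnKC // -ltnS.
exact: bihomogM.
Qed.

Lemma poly_bihomogC pq a : bihomog pq a -> poly_bihomog pq a%:P.
Proof. by move=> ha [|i]; rewrite coefC ?subr0 //; apply: bihomog0. Qed.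

Lemma poly_bihomogXn e : poly_bihomog ((2, 0) *+ e) 'X^e.
Proof.
move=> i; rewrite coefXn; have [->|_] := eqVneq i e; last exact: bihomog0.
by rewrite subrr -mpolyC1; apply: bihomogC.
Qed.

Lemma poly_bihomog_poly pq m (E : nat -> {mpoly k[n]}) :
  (forall i, (i < m)%N -> bihomog (pq - (2, 0) *+ i) (E i)) ->
  poly_bihomog pq (\poly_(i < m) E i).
Proof. by move=> hE i; rewrite coef_poly; case: ifP => [/hE|_] //; apply: bihomog0. Qed.

Lemma poly_bihomog_rmodp pq p q : q \is monic ->
  poly_bihomog ((2, 0) *+ (size q).-1) q -> poly_bihomog pq p ->
  poly_bihomog pq (rmodp p q).
Proof.
move=> monq hq; move: (leqnn (size p)); move: {2}(size p) => N.
elim: N p => [|N IH] p szp hp.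
  by rewrite leqn0 size_poly_eq0 in szp; rewrite (eqP szp) rmod0p in hp *.
have [ltpq|geqp] := ltnP (size p) (size q); first by rewrite rmodp_small.
set s := (size q).-1; have szq : size q = s.+1 by rewrite prednK // size_poly_gt0 monic_neq0.
set r := 'X^(N - s) * q.
have -> : rmodp p q = rmodp (p - p`_N *: r) q.
  by rewrite rmodpB // rmodpZ // rmodp_mull // scaler0 subr0.
have leNs : (s <= N)%N by rewrite -ltnS -szq (leq_trans geqp).
apply: IH.
  apply/leq_sizeP => j leNj; rewrite coefB coefZ coefXnM ltnNge (leq_trans (leq_subr _ _) leNj) /=.
  case: (ltngtP N j) leNj => // [ltNj _|<- _].
    rewrite [p`_j]nth_default ?(leq_trans szp ltNj) // [q`_ _]nth_default ?mulr0 ?subr0 // szq.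
    lia.
  by rewrite subKn // /s -lead_coefE (monicP monq) mulr1 subrr.
apply: poly_bihomogB => //; rewrite -mul_polyC /r.
have -> : pq = (pq - (2, 0) *+ N) + ((2, 0) *+ (N - s) + (2, 0) *+ s).
  by rewrite -mulrnDr (subnK leNs) [RHS]subrK.
by apply: poly_bihomogM; [exact: poly_bihomogC | apply: poly_bihomogM; first exact: poly_bihomogXn].
Qed.
End PolyBihomog.


Lemma pair20_mulrn m : ((2, 0) : int * int) *+ m = (Posz (2 * m)%N, 0).
Proof. by rewrite pairMnE mul0rn /= -mulrnA natz. Qed.

Lemma degA_lshift e (j : 'I_e) : degA (lshift e j) = (2, 0) *+ (e - j).
Proof. by rewrite /degA split_lshift pair20_mulrn. Qed.

Lemma degA_rshift e (j : 'I_e) : degA (rshift e j) = (2, 0) *+ (e - j) + (0, -2).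
Proof. by rewrite /degA split_rshift pair20_mulrn; congr pair; rewrite ?addr0 ?add0r. Qed.

Lemma gen0E d (i : 'I_d.+1) : gen0 i = (2, 0) *+ i.
Proof. by rewrite /gen0 pair20_mulrn. Qed.

Lemma gen1E d (i : 'I_d.+1) : gen1 i = (2, 0) *+ d.+1 + (0, -2) + (2, 0) *+ i.
Proof. by rewrite /gen1 addrAC -mulrnDr pair20_mulrn mulnDr; congr pair; rewrite ?addr0 ?add0r. Qed.

(** * [B_d] as [A_(d+1)[X]/(P, Q)] *)

HB.instance Definition _ (k : fieldType) (d : nat) :=
  GRing.RMorphism.copy (@fmor k d) (comp_mpoly [tuple @fvar k d i | i < d.+1 + d.+1]).

Section Presentation.
Variables (k : fieldType) (d : nat).
Local Notation n := d.+1.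
Local Notation A := (Aalg k n).
Local Notation B := (Balg k d).
Local Notation c := (Bc k d).
Local Notation aB := (aB k d).
Local Notation bB := (bB k d).
Local Notation homogA := (@bihomog k (n + n) (@degA n)).
Local Notation homogB := (@bihomog k (d + d).+1 (@degB d)).

Lemma aB_gt j : (n < j)%N -> aB j = 0.
Proof. by move=> ltnj; rewrite /Defs.aB !ifN ?insubN //; lia. Qed.

Lemma bB_ge j : (n <= j)%N -> bB j = 0.
Proof. by move=> lenj; rewrite /Defs.bB; do 2!case: eqP => // _; rewrite insubN //; lia. Qed.

Lemma aB_n : aB n = 1.
Proof. by rewrite /Defs.aB eqxx. Qed.

Definition avar (i : nat) : A := 'X_(lshift n (inord i)).
Definition bvar (i : nat) : A := 'X_(rshift n (inord i)).

Lemma fmor_avar i : (i < n)%N -> fmor (avar i) = aB i - c * aB i.+1.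
Proof. by move=> ltin; rewrite /fmor comp_mpoly_mktupleX /fvar split_lshift inordK. Qed.

Lemma fmor_bvar i : (i < n)%N -> fmor (bvar i) = bB i - c * bB i.+1.
Proof. by move=> ltin; rewrite /fmor comp_mpoly_mktupleX /fvar split_rshift inordK. Qed.

Definition relP : {poly A} := 'X^n + \poly_(i < n) avar i.
Definition relQ : {poly A} := \poly_(i < n) bvar i.

Lemma coef_relP_ord (j : 'I_n) : relP`_j = 'X_(lshift n j).
Proof. by rewrite coefD coefXn coef_poly ltn_ord ltn_eqF // add0r /avar inord_val. Qed.

Lemma coef_relQ_ord (j : 'I_n) : relQ`_j = 'X_(rshift n j).
Proof. by rewrite coef_poly ltn_ord /bvar inord_val. Qed.

Lemma size_relQ : (size relQ <= n)%N.
Proof. exact: size_poly. Qed.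

Lemma size_relP : size relP = n.+1.
Proof. by rewrite size_addl size_polyXn // ltnS size_poly. Qed.

Lemma monic_relP : relP \is monic.
Proof. by rewrite monicE lead_coefDl ?lead_coefXn // size_polyXn ltnS size_poly. Qed.

Lemma fmor_coef_relP j : fmor relP`_j = aB j - c * aB j.+1.
Proof.
rewrite coefD coefXn coef_poly; case: (ltngtP j n) => [ltjn|ltnj|->].
- by rewrite add0r fmor_avar.
- by rewrite add0r rmorph0 !aB_gt ?mulr0 ?subr0 // ltnW.
- by rewrite addr0 /= rmorph1 aB_n aB_gt // mulr0 subr0.
Qed.

Lemma fmor_coef_relQ j : fmor relQ`_j = bB j - c * bB j.+1.
Proof.
rewrite coef_poly; case: ltnP => [ltjn|lenj]; first by rewrite fmor_bvar.
by rewrite rmorph0 !bB_ge ?mulr0 ?subr0 // ltnW.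
Qed.

Definition fpoly : {poly A} -> B := horner_morph (fun a : A => mulrC c (fmor a)).
HB.instance Definition _ :=
  GRing.RMorphism.copy fpoly (horner_morph (fun a : A => mulrC c (fmor a))).

Lemma fpolyC a : fpoly a%:P = fmor a.
Proof. exact: horner_morphC. Qed.

Lemma fpolyX : fpoly 'X = c.
Proof. exact: horner_morphX. Qed.

Lemma fpoly_drop_relP j : fpoly (drop_poly j relP) = aB j.
Proof.
rewrite /fpoly /horner_morph (@horner_map_telescope _ _ _ _ (fun i => aB (i + j)) _ n.+1).
- by rewrite add0n [aB (_ + _)]aB_gt ?mul0r ?subr0 // ltnS leq_addr.
- by rewrite size_drop_poly size_relP leq_subr.
- by move=> i; rewrite coef_drop_poly; apply: fmor_coef_relP.
Qed.

Lemma fpoly_drop_relQ j : fpoly (drop_poly j relQ) = bB j.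
Proof.
rewrite /fpoly /horner_morph (@horner_map_telescope _ _ _ _ (fun i => bB (i + j)) _ n).
- by rewrite add0n [bB (_ + _)]bB_ge ?mul0r ?subr0 // leq_addr.
- by rewrite size_drop_poly (leq_trans (leq_subr _ _) size_relQ).
- by move=> i; rewrite coef_drop_poly; apply: fmor_coef_relQ.
Qed.

Lemma fpoly_relP : fpoly relP = 0.
Proof. by rewrite -[relP]drop_poly0l fpoly_drop_relP. Qed.

Lemma fpoly_relQ : fpoly relQ = 0.
Proof. by rewrite -[relQ]drop_poly0l fpoly_drop_relQ. Qed.

Lemma Bidx_aE (j : 'I_d) : Bidx_a j = lift ord_max (lshift d j).
Proof. by apply: val_inj; rewrite /= /bump leqNgt (leq_trans (ltn_ord j)) ?leq_addr. Qed.

Lemma Bidx_bE (j : 'I_d) : Bidx_b j = lift ord_max (rshift d j).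
Proof. by apply: val_inj; rewrite /= /bump leqNgt ltn_add2l ltn_ord. Qed.

Lemma aB_Bidx (j : 'I_d) : aB j.+1 = 'X_(Bidx_a j).
Proof. by rewrite /Defs.aB /= ifN ?valK // eqSS ltn_eqF. Qed.

Lemma bB_Bidx (j : 'I_d) : bB j.+1 = 'X_(Bidx_b j).
Proof. by rewrite /Defs.bB /= ifN ?valK // eqSS ltn_eqF. Qed.

Definition lift_var (i : 'I_(d + d).+1) : {poly A} :=
  match unlift ord_max i with
  | None => 'X
  | Some j => match split j with
              | inl j' => drop_poly j'.+1 relP
              | inr j' => drop_poly j'.+1 relQ
              end
  end.

Definition liftB : B -> {poly A} := mmap (polyC \o @mpolyC (n + n) k) lift_var.
HB.instance Definition _ :=
  GRing.RMorphism.copy liftB (mmap (polyC \o @mpolyC (n + n) k) lift_var).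

Lemma liftB_X i : liftB 'X_i = lift_var i.
Proof. by rewrite /liftB mmapX mmap1U. Qed.

Lemma liftB_c : liftB c = 'X.
Proof. by rewrite liftB_X /lift_var unlift_none. Qed.

Lemma fpoly_liftB b : fpoly (liftB b) = b.
Proof.
elim/mpoly_ring_ind: b => [a|i|p q hp hq|p q hp hq].
- by rewrite /liftB mmapC /= fpolyC /fmor comp_mpolyC.
- rewrite liftB_X /lift_var; case: unliftP => [j ->|->]; last exact: fpolyX.
  case: split_ordP => j' ->.
    by rewrite -Bidx_aE -aB_Bidx fpoly_drop_relP.
  by rewrite -Bidx_bE -bB_Bidx fpoly_drop_relQ.
- by rewrite rmorphD rmorphD -[in RHS]hp -[in RHS]hq.
- by rewrite rmorphM rmorphM -[in RHS]hp -[in RHS]hq.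
Qed.

Lemma liftB_aB j : (0 < j <= n)%N -> liftB (aB j) = drop_poly j relP.
Proof.
case/andP; case: j => // j _; rewrite ltnS leq_eqVlt => /orP[/eqP->|ltjd].
  by rewrite aB_n rmorph1 /relP addrC -[X in _ + X]mul1r drop_polyDMXn ?size_poly.
by rewrite (aB_Bidx (Ordinal ltjd)) liftB_X /lift_var Bidx_aE liftK split_lshift.
Qed.

Lemma liftB_bB j : (0 < j <= n)%N -> liftB (bB j) = drop_poly j relQ.
Proof.
case/andP; case: j => // j _; rewrite ltnS leq_eqVlt => /orP[/eqP->|ltjd].
  by rewrite bB_ge // rmorph0 drop_poly_eq0 ?size_relQ.
by rewrite (bB_Bidx (Ordinal ltjd)) liftB_X /lift_var Bidx_bE liftK split_rshift.
Qed.

Definition in_relideal (z : {poly A}) := exists u v, z = u * relP + v * relQ.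

Lemma in_relideal0 : in_relideal 0.
Proof. by exists 0, 0; rewrite !mul0r addr0. Qed.

Lemma in_relidealB y z : in_relideal y -> in_relideal z -> in_relideal (y - z).
Proof. by move=> [u1 [v1 ->]] [u2 [v2 ->]]; exists (u1 - u2), (v1 - v2); ring. Qed.

Lemma in_relidealD y z : in_relideal y -> in_relideal z -> in_relideal (y + z).
Proof. by move=> [u1 [v1 ->]] [u2 [v2 ->]]; exists (u1 + u2), (v1 + v2); ring. Qed.

Lemma in_relidealMl w z : in_relideal z -> in_relideal (w * z).
Proof. by move=> [u [v ->]]; exists (w * u), (w * v); ring. Qed.

Lemma drop_relP_congr j : (j <= n)%N -> in_relideal (drop_poly j relP - liftB (aB j)).
Proof.
case: j => [_|j ltjn]; last by rewrite liftB_aB // subrr; apply: in_relideal0.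
by rewrite drop_poly0l rmorph0 subr0; exists 1, 0; rewrite mul1r mul0r addr0.
Qed.

Lemma drop_relQ_congr j : (j <= n)%N -> in_relideal (drop_poly j relQ - liftB (bB j)).
Proof.
case: j => [_|j ltjn]; last by rewrite liftB_bB // subrr; apply: in_relideal0.
by rewrite drop_poly0l rmorph0 subr0; exists 0, 1; rewrite mul1r mul0r add0r.
Qed.

Definition lift_congr z := in_relideal (z - liftB (fpoly z)).

Lemma lift_congrD y z : lift_congr y -> lift_congr z -> lift_congr (y + z).
Proof.
by rewrite /lift_congr rmorphD rmorphD opprD addrACA; apply: in_relidealD.
Qed.

Lemma lift_congrM y z : lift_congr y -> lift_congr z -> lift_congr (y * z).
Proof.
rewrite /lift_congr rmorphM rmorphM /= => hy hz.
have -> : forall a b a' b' : {poly A}, a * b - a' * b' = a * (b - b') + b' * (a - a').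
  by move=> *; ring.
by apply: in_relidealD; apply: in_relidealMl.
Qed.

Lemma lift_congrX : lift_congr 'X.
Proof. by rewrite /lift_congr fpolyX liftB_c subrr; apply: in_relideal0. Qed.

Lemma lift_congr_coef (r : {poly A}) (s : nat -> B) j :
  (forall i, fmor r`_i = s i - c * s i.+1) ->
  (forall i, (i <= n)%N -> in_relideal (drop_poly i r - liftB (s i))) ->
  (j < n)%N -> lift_congr (r`_j)%:P.
Proof.
move=> hs hr ltjn; rewrite /lift_congr fpolyC hs rmorphB rmorphM /= liftB_c.
have := hr j (ltnW ltjn); rewrite drop_poly_cons => h0.
have /(in_relidealMl 'X) h1 := hr j.+1 ltjn.
have e : forall a x d1 l0 l1 : {poly A}, a + x * d1 - l0 - x * (d1 - l1) = a - (l0 - x * l1).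
  by move=> *; ring.
by move: (in_relidealB h0 h1); rewrite e.
Qed.

Lemma lift_congrC a : lift_congr a%:P.
Proof.
elim/mpoly_ring_ind: a => [a|i|p q hp hq|p q hp hq].
- by rewrite /lift_congr fpolyC /fmor comp_mpolyC /liftB mmapC subrr; apply: in_relideal0.
- case: (split_ordP i) => j ->; rewrite -?coef_relP_ord -?coef_relQ_ord.
    by apply: lift_congr_coef; [exact: fmor_coef_relP | exact: drop_relP_congr |].
  by apply: lift_congr_coef; [exact: fmor_coef_relQ | exact: drop_relQ_congr |].
- by rewrite polyCD; apply: lift_congrD.
- by rewrite polyCM; apply: lift_congrM.
Qed.

Lemma lift_fpoly_congr z : in_relideal (z - liftB (fpoly z)).
Proof.
elim/poly_ind: z => [|z a hz]; first by rewrite rmorph0 rmorph0 subr0; apply: in_relideal0.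
exact: lift_congrD (lift_congrM hz lift_congrX) (lift_congrC a).
Qed.

(** * The resolution *)

Definition mulQ (x : 'rV[A]_n) : 'rV[A]_n := poly_rV (rmodp (rVpoly x * relQ) relP).

Fact mulQ_is_linear : linear mulQ.
Proof.
move=> a x y; rewrite /mulQ linearP /= mulrDl -scalerAl.
by rewrite rmodpD ?rmodpZ ?monic_relP // linearP.
Qed.
HB.instance Definition _ := GRing.isLinear.Build A 'rV[A]_n 'rV[A]_n _ mulQ mulQ_is_linear.

Definition evalB (x : 'rV[A]_n) : B := fpoly (rVpoly x).

Lemma evalB_semilinear (a : A) x y : evalB (a *: x + y) = fmor a * evalB x + evalB y.
Proof. by rewrite /evalB linearP /= -mul_polyC rmorphD rmorphM /= fpolyC. Qed.

Lemma size_rmodp_relP p : (size (rmodp p relP) <= n)%N.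
Proof. by rewrite -ltnS -size_relP ltn_rmodpN0 // monic_neq0 ?monic_relP. Qed.

Lemma fpoly_rmodp p : fpoly (rmodp p relP) = fpoly p.
Proof. by rewrite [in RHS](rdivp_eq monic_relP p) rmorphD rmorphM /= fpoly_relP mulr0 add0r. Qed.

Lemma evalB_mulQ x : evalB (mulQ x) = 0.
Proof.
by rewrite /evalB /mulQ poly_rV_K ?size_rmodp_relP // fpoly_rmodp rmorphM /= fpoly_relQ mulr0.
Qed.

Lemma evalB_eq0 y : evalB y = 0 -> exists x, mulQ x = y.
Proof.
move=> y0; have [u [v e]] := lift_fpoly_congr (rVpoly y).
rewrite -/(evalB y) y0 rmorph0 subr0 in e.
exists (poly_rV (rmodp v relP)).
rewrite /mulQ poly_rV_K ?size_rmodp_relP // rmodp_mulml ?monic_relP //.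
rewrite -[v * relQ](addKr (u * relP)) -e addrC rmodpB ?monic_relP //.
rewrite rmodp_mull ?monic_relP // subr0.
by rewrite rmodp_small ?rVpolyK // size_relP ltnS size_poly.
Qed.

Lemma evalB_surj b : exists y, evalB y = b.
Proof.
exists (poly_rV (rmodp (liftB b) relP)).
by rewrite /evalB poly_rV_K ?size_rmodp_relP // fpoly_rmodp fpoly_liftB.
Qed.

Definition bspec_var (i : 'I_(n + n)) : A :=
  match split i with inl _ => 'X_i | inr j => (j == 0 :> nat)%:R end.
Local Notation bspec := (comp_mpoly [tuple bspec_var i | i < n + n]).

Lemma map_bspec_relP : map_poly bspec relP = relP.
Proof.
rewrite /relP rmorphD /= map_polyXn; congr (_ + _); apply/polyP => j.
rewrite coef_map /= !coef_poly; case: ifP => ltjn; last exact: rmorph0.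
by rewrite /avar comp_mpoly_mktupleX /bspec_var split_lshift.
Qed.

Lemma map_bspec_relQ : map_poly bspec relQ = 1.
Proof.
apply/polyP => j; rewrite coef_map /= coef_poly coef1; case: ifP => ltjn.
  by rewrite /bvar comp_mpoly_mktupleX /bspec_var split_rshift inordK.
by rewrite rmorph0; case: j ltjn.
Qed.

Lemma map_bspec_mulQ_mx : map_mx bspec (lin1_mx mulQ) = 1%:M.
Proof.
apply/matrixP => i j; rewrite !mxE /mulQ rVpoly_delta -coef_map rmodp_map ?monic_relP //.
rewrite rmorphM /= map_polyXn map_bspec_relQ map_bspec_relP mulr1 rmodp_small ?coefXn 1?eq_sym //.
by rewrite size_relP (size_polyXn A i) ltnS ltn_ord.
Qed.

Lemma det_mulQ_mx_neq0 : \det (lin1_mx mulQ) != 0.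
Proof.
apply: contra_neq (@oner_neq0 A) => det0.
by rewrite -(det1 _ n) -map_bspec_mulQ_mx det_map_mx det0 rmorph0.
Qed.

Lemma mulQ_inj : injective mulQ.
Proof.
move=> x y; rewrite -!mul_rV_lin1 => /eqP; rewrite -subr_eq0 -mulmxBl => /eqP xyM0.
apply/eqP; rewrite -subr_eq0; apply: contraNT det_mulQ_mx_neq0 => nz_xy.
by apply/det0P; exists (x - y).
Qed.

(** * Bidegrees *)

Lemma degB_lift (j : 'I_(d + d)) : degB (lift ord_max j) = degA j.
Proof. by rewrite /degB liftK. Qed.

Lemma bihomog_c : homogB (2, 0) c.
Proof. by have := @bihomogX k _ (@degB d) ord_max; rewrite /degB unlift_none. Qed.

Lemma bihomog_aB j : (j <= n)%N -> homogB ((2, 0) *+ (n - j)) (aB j).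
Proof.
case: j => [_|j]; first exact: bihomog0.
rewrite ltnS leq_eqVlt => /orP[/eqP->|ltjd]; first by rewrite aB_n subnn -mpolyC1; apply: bihomogC.
have := @bihomogX k _ (@degB d) (Bidx_a (Ordinal ltjd)).
by rewrite -aB_Bidx Bidx_aE degB_lift degA_lshift subSS.
Qed.

Lemma bihomog_bB j : (j <= n)%N -> homogB ((2, 0) *+ (n - j) + (0, -2)) (bB j).
Proof.
case: j => [_|j]; first exact: bihomog0.
rewrite ltnS leq_eqVlt => /orP[/eqP->|ltjd]; first by rewrite bB_ge //; apply: bihomog0.
have := @bihomogX k _ (@degB d) (Bidx_b (Ordinal ltjd)).
by rewrite -bB_Bidx Bidx_bE degB_lift degA_rshift subSS.
Qed.

Lemma bihomog_fmor pq a : homogA pq a -> homogB pq (fmor a).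
Proof.
apply: bihomog_comp => i; rewrite tnth_mktuple /fvar.
have ltjn (j : 'I_n) : (n - j = (n - j.+1).+1)%N by rewrite subnSK.
case: (split_ordP i) => j ->; rewrite ?split_lshift ?split_rshift ?degA_lshift ?degA_rshift.
  apply: bihomogB; first exact/bihomog_aB/ltnW.
  by rewrite ltjn mulrS; apply: bihomogM bihomog_c (bihomog_aB _).
apply: bihomogB; first exact/bihomog_bB/ltnW.
by rewrite ltjn mulrS -addrA; apply: bihomogM bihomog_c (bihomog_bB _).
Qed.

Lemma poly_bihomog_relP : poly_bihomog (@degA n) ((2, 0) *+ n) relP.
Proof.
move=> i; rewrite coefD coefXn coef_poly; case: (ltngtP i n) => [ltin|ltni|->].
- have := @bihomogX k _ (@degA n) (lshift n (inord i)).
  by rewrite add0r degA_lshift inordK // mulrnBr // ltnW.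
- by rewrite add0r; apply: bihomog0.
- by rewrite addr0 subrr /= -mpolyC1; apply: bihomogC.
Qed.

Lemma poly_bihomog_relQ : poly_bihomog (@degA n) ((2, 0) *+ n + (0, -2)) relQ.
Proof.
apply: poly_bihomog_poly => i ltin; have := @bihomogX k _ (@degA n) (rshift n (inord i)).
by rewrite degA_rshift inordK // mulrnBr 1?addrAC // ltnW.
Qed.

Lemma evalB_homog pq x : free_homog (@gen0 d) pq x -> homogB pq (evalB x).
Proof.
move=> hx; rewrite /evalB /fpoly /horner_morph (@horner_coef_wide _ n); last first.
  exact: leq_trans (size_poly _ _) (size_poly _ _).
apply: bihomog_sum => i _; rewrite coef_map /= coef_rVpoly_ord.
have hxi : homogA (pq - (2, 0) *+ i) (x 0 i) by rewrite -gen0E; apply: hx.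
by rewrite -[pq](subrK ((2, 0) *+ i)); apply: bihomogM (bihomog_fmor hxi) (bihomogXn bihomog_c).
Qed.

Lemma mulQ_homog pq x : free_homog (@gen1 d) pq x -> free_homog (@gen0 d) pq (mulQ x).
Proof.
move=> hx i; rewrite mxE -[(_, _)]/(pq - gen0 i) gen0E.
suff : poly_bihomog (@degA n) pq (rmodp (rVpoly x * relQ) relP) by apply.
apply: poly_bihomog_rmodp monic_relP _ _; first by rewrite size_relP; apply: poly_bihomog_relP.
rewrite -[pq](subrK ((2, 0) *+ n + (0, -2))); apply: poly_bihomogM poly_bihomog_relQ.
move=> j; rewrite coef_rVpoly; case: insubP => [j' _ <-|_]; last exact: bihomog0.
by have := hx j'; rewrite -[(_, _)]/(pq - gen1 j') gen1E opprD addrA.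
Qed.

End Presentation.

Theorem mainTheorem1 (k : fieldType) (d : nat) :
  exists (alpha : 'rV[Aalg k d.+1]_d.+1 -> 'rV[Aalg k d.+1]_d.+1)
         (beta : 'rV[Aalg k d.+1]_d.+1 -> Balg k d),
    (* alpha is a morphism of bigraded A_(d+1)-modules *)
    (forall (a : Aalg k d.+1) x y, alpha (a *: x + y) = a *: alpha x + alpha y) /\
    (forall pq x, free_homog (@gen1 d) pq x -> free_homog (@gen0 d) pq (alpha x)) /\
    (* beta is a morphism of bigraded A_(d+1)-modules, B_d an A_(d+1)-module via f *)
    (forall (a : Aalg k d.+1) x y,
        beta (a *: x + y) = fmor a * beta x + beta y) /\
    (forall pq x, free_homog (@gen0 d) pq x -> bihomog (@degB d) pq (beta x)) /\
    (* exactness of 0 -> F1 -> F0 -> B_d -> 0 *)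
    injective alpha /\
    (forall y, beta y = 0 <-> exists x, alpha x = y) /\
    (forall b : Balg k d, exists y, beta y = b).
Proof.
exists (@mulQ k d), (@evalB k d).
split; first exact: mulQ_is_linear.
split; first exact: mulQ_homog.
split; first exact: evalB_semilinear.
split; first exact: evalB_homog.
split; first exact: mulQ_inj.
split; last exact: evalB_surj.
by move=> y; split=> [/evalB_eq0 | [x <-]]; last exact: evalB_mulQ.
Qed.
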